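(* Let $A$ be a finite alphabet, let $x_1x_2x_3\dots$ be an infinite sequence of letters of $A$, let $m\ge 1$, and let $\varphi_1,\dots,\varphi_m$ be data compressors, i.e. maps from finite words over $A$ to finite binary words. Assume that for every $i=1,\dots,m$ the limit $$\lambda_i=\lim_{n\to\infty}\frac{|\varphi_i(x_1x_2\dots x_n)|}{n}$$ exists. Fix $\delta>0$ and let $\Phi_1^\delta$ be the following method: given $x_1\dots x_n$, put $r=\lfloor \delta T/v\rfloor=\lfloor \delta n\rfloor$ (where $v>0$ is an upper bound on the per-letter encoding time of all $\varphi_i$ and $T=nv$), compute $|\varphi_1(x_1\dots x_r)|,\dots,|\varphi_m(x_1\dots x_r)|$, choose an index $s=s(n)\in\{1,\dots,m\}$ with $|\varphi_s(x_1\dots x_r)|=\min_{1\le i\le m}|\varphi_i(x_1\dots x_r)|$, and output the codeword $\langle s\rangle\,\varphi_s(x_1\dots x_n)$, where $\langle s\rangle$ is a $\lceil\log_2 m\rceil$-bit binary representation of $s$. Thus $|\Phi_1^\delta(x_1\dots x_n)|=\lceil\log_2 m\rceil+|\varphi_{s(n)}(x_1\dots x_n)|$. Then $$\lim_{n\to\infty}\frac{|\Phi_1^\delta(x_1x_2\dots x_n)|}{n}=\min_{i=1,\dots,m}\lim_{n\to\infty}\frac{|\varphi_i(x_1x_2\dots x_n)|}{n},$$ i.e. $\Phi_1^\delta$ is time-universal.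
   Context: $|w|$ denotes the length of a binary word $w$. A compressing method is called time-universal if the limit of its per-letter codeword length equals the infimum over the given compressors of their limiting per-letter codeword lengths. The prefix $x_1\dots x_r$ refers to the given infinite sequence (for $r=0$ it is the empty word). *)

From HB Require Import structures.
From mathcomp Require Import all_boot all_order all_algebra.
From mathcomp Require Import all_classical all_reals all_analysis.
Set Implicit Arguments. Unset Strict Implicit. Unset Printing Implicit Defensive.
Import Order.TTheory GRing.Theory Num.Theory.
Local Open Scope ring_scope.

(* prefix x_1 ... x_n of the infinite sequence x (x 0 is the first letter) *)
Definition wprefix (A : Type) (x : nat -> A) (n : nat) : seq A :=
  [seq x i | i <- iota 0 n].

Definition bits (w k : nat) : seq bool := mkseq (fun i => odd (k %/ 2 ^ i)) w.

Definition idx_width (m : nat) : nat := up_log 2 m.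

Definition look_len (R : realType) (delta : R) (n : nat) : nat :=
  Num.truncn (delta * n%:R).

Definition admissible_choice (R : realType) (A : Type) (m : nat)
  (phi : 'I_m -> seq A -> seq bool) (x : nat -> A) (delta : R)
  (s : nat -> 'I_m) : Prop :=
  forall n (i : 'I_m),
    (size (phi (s n) (wprefix x (look_len delta n)))
       <= size (phi i (wprefix x (look_len delta n))))%N.

Definition Phi1 (A : Type) (m : nat) (phi : 'I_m -> seq A -> seq bool)
  (x : nat -> A) (s : nat -> 'I_m) (n : nat) : seq bool :=
  bits (idx_width m) (s n) ++ phi (s n) (wprefix x n).

Definition fmin (R : realType) (m : nat) (hm : (0 < m)%N) (lam : 'I_m -> R) : R :=
  \big[Order.min/lam (Ordinal hm)]_(i < m) lam i.

(* If
   lam_i < lam_j, then phi_i is eventually strictly shorter than phi_j, so for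
   all large r a compressor that is shortest on x_1..x_r has a minimal limit.
   The look-ahead length r = floor(delta n) tends to infinity with n, hence
   eventually lam_(s n) = min_i lam_i, while the index header of ceil(log2 m)
   bits costs nothing per letter in the limit. *)

From mathcomp Require Import all_boot all_order all_algebra.
From mathcomp Require Import all_classical all_reals all_analysis.
From mathcomp Require Import lra.
Import Order.TTheory GRing.Theory Num.Theory numFieldNormedType.Exports.
Local Open Scope classical_set_scope.
Local Open Scope ring_scope.

Definition per_letter {R : numFieldType} (c : nat -> nat) (n : nat) : R :=
  (c n)%:R / n%:R.

Section per_letter_limits.
Context {R : realFieldType}.

Lemma cvgr_lt_eventually {T : Type} {F : set_system T} {FF : Filter F}
    (f g : T -> R) (a b : R) :
  f @ F --> a -> g @ F --> b -> a < b -> \forall t \near F, f t < g t.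
Proof.
move=> fa gb ab; have az : a < (a + b) / 2 by lra.
have zb : (a + b) / 2 < b by lra.
near=> t; apply: (@lt_trans _ _ ((a + b) / 2)); near: t.
- exact: cvgr_lt fa _ az.
- exact: cvgr_gt gb _ zb.
Unshelve. all: by end_near. Qed.

Lemma per_letter_lt_eventually (c d : nat -> nat) (a b : R) :
    per_letter c @ \oo --> a -> per_letter d @ \oo --> b -> a < b ->
  \forall n \near \oo, (c n < d n)%N.
Proof.
move=> ca db ab; near=> n; have n_gt0 : (0 < n)%N by near: n; exact: nbhs_infty_gt.
rewrite -(ltr_nat R) -(ltr_pM2r (_ : 0 < n%:R^-1)) ?invr_gt0 ?ltr0n //.
by near: n; exact: cvgr_lt_eventually ca db ab.
Unshelve. all: by end_near. Qed.

Section minimizers.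
Context {I : finType} {c : I -> nat -> nat} {lam : I -> R}.
Hypothesis c_cvg : forall i, per_letter (c i) @ \oo --> lam i.

Lemma minimizer_minimizes_limit :
  \forall r \near \oo, forall t, (forall i, c t r <= c i r)%N ->
    forall i, lam t <= lam i.
Proof.
have sep : \forall r \near \oo, forall it : I * I,
    lam it.1 < lam it.2 -> (c it.1 r < c it.2 r)%N.
  apply: filter_forall => -[i t] /=.
  have [lt|_] := ltP (lam i) (lam t); last exact: nearW.
  near=> r => _; near: r.
  exact: per_letter_lt_eventually (c_cvg i) (c_cvg t) lt.
apply: filterS sep => r sep t tmin i; rewrite leNgt; apply/negP => lt.
by have := sep (i, t) lt; rewrite ltnNge tmin.
Unshelve. all: by end_near. Qed.

Lemma lookahead_minimizer_minimizes_limit {r : nat -> nat} {t : nat -> I} :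
    r @ \oo --> \oo -> (forall n i, c (t n) (r n) <= c i (r n))%N ->
  \forall n \near \oo, forall i, lam (t n) <= lam i.
Proof.
move=> r_cvg tmin.
have opt_r : \forall n \near \oo,
    forall s, (forall i, c s (r n) <= c i (r n))%N -> forall i, lam s <= lam i.
  exact: r_cvg minimizer_minimizes_limit.
by near=> n; apply: (near opt_r n) => //; exact: tmin.
Unshelve. all: by end_near. Qed.

End minimizers.

Lemma cvg_select {I : finType} {u : I -> nat -> R} {lam : I -> R} {t : nat -> I}
    {L : R} :
    (forall i, u i @ \oo --> lam i) -> (\forall n \near \oo, lam (t n) = L) ->
  (fun n => u (t n) n) @ \oo --> L.
Proof.
move=> u_cvg tL; apply/cvgrPdist_lt => e e0.
have close : \forall n \near \oo, forall i, `|lam i - u i n| < e.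
  by apply: filter_forall => i; move/cvgrPdist_lt: (u_cvg i); apply.
by near=> n; rewrite -(near tL n) //; exact: (near close n).
Unshelve. all: by end_near. Qed.

End per_letter_limits.

Lemma cvg_per_letter_cst {R : realType} (k : nat) :
  per_letter (fun=> k) @ \oo --> (0 : R).
Proof.
rewrite -(mulr0 k%:R); apply: cvgM; first exact: cvg_cst.
apply/gtr0_cvgV0; last exact: cvgr_idn.
by apply: filterS (nbhs_infty_gt 0) => n; rewrite ltr0n.
Qed.

Lemma look_len_cvgy {R : realType} {delta : R} :
  0 < delta -> look_len delta @ \oo --> \oo.
Proof.
move=> delta_gt0; apply/cvgnyPge => N.
apply: filterS (nbhs_infty_ger (N%:R / delta)) => n.
rewrite ler_pdivrMr // mulrC => Nn.
by rewrite /look_len truncn_ge_nat // mulr_ge0 ?ler0n ?ltW.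
Qed.

Lemma fmin_eq {R : realType} (m : nat) (hm : (0 < m)%N) (lam : 'I_m -> R)
    (t : 'I_m) :
  (forall i, lam t <= lam i) -> fmin hm lam = lam t.
Proof. by move=> tmin; apply/le_anti; rewrite bigmin_le le_bigmin. Qed.

Lemma size_Phi1 (A : Type) (m : nat) (phi : 'I_m -> seq A -> seq bool)
    (x : nat -> A) (s : nat -> 'I_m) (n : nat) :
  size (Phi1 phi x s n) = (idx_width m + size (phi (s n) (wprefix x n)))%N.
Proof. by rewrite size_cat size_mkseq. Qed.

Theorem claim1 (R : realType) (A : finType) (x : nat -> A) (m : nat)
  (hm : (0 < m)%N) (phi : 'I_m -> seq A -> seq bool) (lam : 'I_m -> R)
  (hlam : forall i : 'I_m,
     (fun n : nat => (size (phi i (wprefix x n)))%:R / n%:R : R) @ \oo --> lam i)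
  (delta : R) (hdelta : 0 < delta) (s : nat -> 'I_m)
  (hs : admissible_choice phi x delta s) :
  (fun n : nat => (size (Phi1 phi x s n))%:R / n%:R : R) @ \oo --> fmin hm lam.
Proof.
pose c i n := size (phi i (wprefix x n)).
have s_opt : \forall n \near \oo, lam (s n) = fmin hm lam.
  have := lookahead_minimizer_minimizes_limit (c := c) hlam
    (look_len_cvgy hdelta) hs.
  by apply: filterS => n /fmin_eq ->.
have -> : (fun n => (size (Phi1 phi x s n))%:R / n%:R : R) =
    fun n => per_letter (fun=> idx_width m) n + per_letter (fun n => c (s n) n) n.
  by apply/funext => n; rewrite size_Phi1 /per_letter natrD mulrDl.
rewrite -[fmin hm lam]add0r; apply: cvgD; first exact: cvg_per_letter_cst.
exact: (cvg_select (u := fun i => per_letter (c i)) hlam s_opt).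
Qed.
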